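(* Let $R$ be a commutative noetherian ring. Then every factor ring of $R$ has the property that all its modules of finite length are homomorphic images of injective modules if and only if every factor ring of $R$ is QF.
   Context: A ring is QF if it is noetherian and self-injective. A ring all of whose factor rings are QF is called super QF. *)

From HB Require Import structures.
From mathcomp Require Import all_boot all_algebra.
Set Implicit Arguments. Unset Strict Implicit. Unset Printing Implicit Defensive.
Import GRing.Theory.
Local Open Scope ring_scope.

Definition is_ideal (S : comNzRingType) (I : S -> Prop) : Prop :=
  [/\ I 0, (forall x y, I x -> I y -> I (x + y)) & (forall a x, I x -> I (a * x))].

Definition noetherian (S : comNzRingType) : Prop :=
  forall I : nat -> S -> Prop,
    (forall n, is_ideal (I n)) ->
    (forall n x, I n x -> I n.+1 x) ->
    exists N, forall n, (N <= n)%N -> forall x, I n x <-> I N x.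

Definition injective_module (S : comNzRingType) (E : lmodType S) : Prop :=
  forall (A B : lmodType S) (f : {linear A -> B}) (g : {linear A -> E}),
    injective f -> exists h : {linear B -> E}, forall a, h (f a) = g a.

Definition is_submodule (S : comNzRingType) (M : lmodType S) (N : M -> Prop) : Prop :=
  [/\ N 0, (forall x y, N x -> N y -> N (x + y)) & (forall (a : S) x, N x -> N (a *: x))].

Definition strict_subset (T : Type) (P Q : T -> Prop) : Prop :=
  (forall x, P x -> Q x) /\ exists x, Q x /\ ~ P x.

Definition finite_length (S : comNzRingType) (M : lmodType S) : Prop :=
  exists n : nat, forall (k : nat) (N : nat -> M -> Prop),
    (forall i, (i <= k)%N -> is_submodule (N i)) ->
    (forall i, (i < k)%N -> strict_subset (N i) (N i.+1)) ->
    (k <= n)%N.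

Definition fl_images_of_injectives (S : comNzRingType) : Prop :=
  forall M : lmodType S, finite_length M ->
    exists (E : lmodType S) (p : {linear E -> M}),
      injective_module E /\ (forall m, exists e, p e = m).

Definition self_injective (S : comNzRingType) : Prop := injective_module S^o.

Definition QF (S : comNzRingType) : Prop := noetherian S /\ self_injective S.

(* Suppose every factor ring of R has all its modules of finite length as
   images of injective modules, and let S be a factor ring. If S had infinite
   length, noetherian induction would give an ideal I maximal with S / I of
   infinite length. Such an I is prime: if x y is in I but x and y are not,
   then (I + x S) / I is isomorphic to S / (I : x), and both S / (I : x) and
   S / (I + x S) have finite length. It is also maximal: otherwise for some
   a outside I, S / (I + a S) is a nonzero S / I-module of finite length
   killed by the regular element a, whereas images of injective modules are
   divisible by regular elements. Then S / I is a field, a contradiction. So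
   S has finite length, is the image of an injective module and, being free,
   is a retract of it, hence self-injective; noetherianity passes to factor
   rings. Conversely, over a QF ring a module of finite length is finitely
   generated, hence an image of the injective module S^n. *)

From HB Require Import structures.
From mathcomp Require Import all_boot all_algebra.
From mathcomp Require Import boolp classical_sets.
From mathcomp Require Import ring_quotient generic_quotient.
Set Implicit Arguments. Unset Strict Implicit. Unset Printing Implicit Defensive.
Import GRing.Theory.
Local Open Scope ring_scope.
Local Open Scope classical_set_scope.

Section IdealQuotient.
Local Open Scope quotient_scope.
Variables (S : comNzRingType) (I : set S).
Hypotheses (idealI : is_ideal I) (properI : ~ I 1).

Definition ideal_mem : {pred S} := fun x => `[< I x >].

Lemma ideal_mem_closed : idealr_closed ideal_mem.
Proof.
case: idealI => I0 ID IM; split; [exact/asboolP | exact/asboolP |].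
by move=> a u v /asboolP Iu /asboolP Iv; apply/asboolP; apply: ID => //; apply: IM.
Qed.

HB.instance Definition _ := isIdealr.Build S ideal_mem ideal_mem_closed.

Definition quot := {ideal_quot ideal_mem}.
Definition quot_pi (x : S) : quot := \pi_quot x.

Lemma quot_pi_eq x y : quot_pi x = quot_pi y <-> I (x - y).
Proof.
split=> [/eqP|Ixy]; first by rewrite -Quotient.idealrBE => /asboolP.
by apply/eqP; rewrite -Quotient.idealrBE; apply/asboolP.
Qed.

Lemma quot_piK (t : quot) : quot_pi (repr t) = t.
Proof. exact: reprK. Qed.

Lemma quot_pi_zmod : zmod_morphism quot_pi.
Proof. by move=> x y; rewrite /quot_pi Quotient.pi_add Quotient.pi_opp. Qed.

Lemma quot_pi_monoid : monoid_morphism quot_pi.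
Proof. by split=> [|x y]; rewrite /quot_pi ?pi_oner ?Quotient.pi_mul. Qed.

HB.instance Definition _ := GRing.isZmodMorphism.Build S quot quot_pi quot_pi_zmod.
HB.instance Definition _ := GRing.isMonoidMorphism.Build S quot quot_pi quot_pi_monoid.

Lemma quot_pi_eq0 x : quot_pi x = 0 <-> I x.
Proof. by rewrite -(rmorph0 quot_pi) quot_pi_eq subr0. Qed.

Section QuotLift.
Variables (T : comNzRingType) (f : {rmorphism S -> T}).
Hypothesis kerf : forall x, I x -> f x = 0.

(* The kernel condition is an argument so that the rmorphism instance below
   can depend on it. *)
Definition quot_lift of (forall x, I x -> f x = 0) : quot -> T :=
  fun t => f (repr t).

Lemma quot_liftE x : quot_lift kerf (quot_pi x) = f x.
Proof.
apply/eqP; rewrite -subr_eq0 -rmorphB; apply/eqP/kerf/quot_pi_eq.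
exact: quot_piK.
Qed.

Lemma quot_lift_zmod : zmod_morphism (quot_lift kerf).
Proof.
by move=> u v; rewrite -(quot_piK u) -(quot_piK v) -rmorphB !quot_liftE rmorphB.
Qed.

Lemma quot_lift_monoid : monoid_morphism (quot_lift kerf).
Proof.
split=> [|u v]; first by rewrite -(rmorph1 quot_pi) quot_liftE rmorph1.
by rewrite -(quot_piK u) -(quot_piK v) -rmorphM !quot_liftE rmorphM.
Qed.

HB.instance Definition _ :=
  GRing.isZmodMorphism.Build quot T (quot_lift kerf) quot_lift_zmod.
HB.instance Definition _ :=
  GRing.isMonoidMorphism.Build quot T (quot_lift kerf) quot_lift_monoid.

End QuotLift.
End IdealQuotient.

Section RestrictScalars.
Variables (A B : comNzRingType).

Definition restrict_scalars of {rmorphism A -> B} : Type := B.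

Variable f : {rmorphism A -> B}.

HB.instance Definition _ := GRing.Zmodule.on (restrict_scalars f).

Definition restrict_scale (a : A) (b : restrict_scalars f) : restrict_scalars f :=
  (f a * b : B).

Lemma restrict_scaleA a b v :
  restrict_scale a (restrict_scale b v) = restrict_scale (a * b) v.
Proof. by rewrite /restrict_scale rmorphM mulrA. Qed.

Lemma restrict_scale1 : left_id 1 restrict_scale.
Proof. by move=> v; rewrite /restrict_scale rmorph1 mul1r. Qed.

Lemma restrict_scaleDr : right_distributive restrict_scale +%R.
Proof. by move=> a u v; rewrite /restrict_scale mulrDr. Qed.

Lemma restrict_scaleDl v : {morph restrict_scale^~ v : a b / a + b}.
Proof. by move=> a b; rewrite /restrict_scale rmorphD mulrDl. Qed.

HB.instance Definition _ := GRing.Zmodule_isLmodule.Build A (restrict_scalars f)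
  restrict_scaleA restrict_scale1 restrict_scaleDr restrict_scaleDl.

Lemma restrict_scalarsZ a (b : restrict_scalars f) : a *: b = (f a * b : B).
Proof. by []. Qed.

End RestrictScalars.

Section InjectiveModules.
Variable S : comNzRingType.

Section ScalarMaps.
Variable x : S.

Definition mulr_lin : S^o -> S^o := fun t => x * t.

Lemma mulr_lin_is_linear : linear mulr_lin.
Proof. by move=> a u v; rewrite /mulr_lin /GRing.scale /= mulrDr mulrCA. Qed.

HB.instance Definition _ :=
  GRing.isLinear.Build S S^o S^o *:%R mulr_lin mulr_lin_is_linear.

Variables (E : lmodType S) (e : E).

Definition scalev_lin : S^o -> E := fun t => t *: e.

Lemma scalev_lin_is_linear : linear scalev_lin.
Proof. by move=> a u v; rewrite /scalev_lin scalerDl scalerA. Qed.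

HB.instance Definition _ :=
  GRing.isLinear.Build S S^o E *:%R scalev_lin scalev_lin_is_linear.

End ScalarMaps.

Lemma injective_divisible (E : lmodType S) (x : S) :
  injective_module E -> GRing.lreg x -> forall e : E, exists e', e = x *: e'.
Proof.
move=> injE regx e; have [h he] := injE _ _ (mulr_lin x) (scalev_lin e) regx.
exists (h 1); rewrite -linearZZ.
by transitivity (scalev_lin e 1); rewrite ?he // /scalev_lin scale1r.
Qed.

Lemma image_divisible (E M : lmodType S) (p : {linear E -> M}) (x : S) :
  injective_module E -> (forall m, exists e, p e = m) ->
  GRing.lreg x -> forall m : M, exists m', m = x *: m'.
Proof.
move=> injE psurj regx m; have [e <-] := psurj m.
by have [e' ->] := injective_divisible injE regx e; exists (p e'); rewrite linearZZ.
Qed.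

(* [S] is free on [1]: sending [1] to a preimage of [1] splits [p]. *)
Lemma self_injective_of_image (E : lmodType S) (p : {linear E -> S^o}) :
  injective_module E -> (forall m, exists e, p e = m) -> self_injective S.
Proof.
move=> injE psurj A B f g finj; have [e pe] := psurj 1.
have [h hf] := injE A B f (scalev_lin e \o g) finj.
exists (p \o h) => a /=; rewrite hf /= /scalev_lin linearZZ pe.
by rewrite /GRing.scale /= mulr1.
Qed.

End InjectiveModules.

Section FreeModules.
Variables (S : comNzRingType) (n : nat).

Section Coordinates.
Variables (A : lmodType S) (g : {linear A -> 'rV[S]_n}) (j : 'I_n).

Definition coord_lin : A -> S^o := fun a => g a 0 j.

Lemma coord_lin_is_linear : linear coord_lin.
Proof. by move=> a u v; rewrite /coord_lin linearP !mxE. Qed.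

HB.instance Definition _ :=
  GRing.isLinear.Build S A S^o *:%R coord_lin coord_lin_is_linear.

End Coordinates.

Section RowOfLinear.
Variables (B : lmodType S) (hs : 'I_n -> {linear B -> S^o}).

Definition row_lin : B -> 'rV[S]_n := fun b => \row_j hs j b.

Lemma row_lin_is_linear : linear row_lin.
Proof. by move=> a u v; apply/rowP => j; rewrite /row_lin !mxE linearP. Qed.

HB.instance Definition _ :=
  GRing.isLinear.Build S B 'rV[S]_n *:%R row_lin row_lin_is_linear.

End RowOfLinear.

Section Combination.
Variables (M : lmodType S) (xs : nat -> M).

Definition comb_lin : 'rV[S]_n -> M := fun v => \sum_(j < n) v 0 j *: xs j.

Lemma comb_lin_is_linear : linear comb_lin.
Proof.
move=> a u v; rewrite /comb_lin scaler_sumr -big_split /=; apply: eq_bigr => j _.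
by rewrite !mxE scalerDl scalerA.
Qed.

HB.instance Definition _ :=
  GRing.isLinear.Build S 'rV[S]_n M *:%R comb_lin comb_lin_is_linear.

End Combination.

Lemma injective_rV : self_injective S -> injective_module 'rV[S]_n.
Proof.
move=> injS A B f g finj.
have ext j : exists h : {linear B -> S^o}, forall a, h (f a) = coord_lin g j a.
  exact: injS.
pose hs j := sval (cid (ext j)).
have hsP j a : hs j (f a) = coord_lin g j a by rewrite /hs; case: cid.
by exists (row_lin hs) => a; apply/rowP => j; rewrite mxE hsP.
Qed.

End FreeModules.

Section FiniteGeneration.
Variables (S : comNzRingType) (M : lmodType S).

Definition prefix_span (xs : nat -> M) (i : nat) : set M :=
  [set y | exists c : nat -> S, y = \sum_(j < i) c j *: xs j].

Lemma prefix_span_submodule xs i : is_submodule (prefix_span xs i).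
Proof.
split.
- by exists (fun _ => 0); rewrite big1 // => j _; rewrite scale0r.
- move=> _ _ [c ->] [d ->]; exists (fun j => c j + d j).
  by rewrite -big_split /=; apply: eq_bigr => j _; rewrite scalerDl.
- move=> a _ [c ->]; exists (fun j => a * c j).
  by rewrite scaler_sumr; apply: eq_bigr => j _; rewrite scalerA.
Qed.

Lemma prefix_spanS xs i : prefix_span xs i `<=` prefix_span xs i.+1.
Proof.
move=> _ [c ->]; exists (fun j => if j == i then 0 else c j).
rewrite big_ord_recr /= eqxx scale0r addr0; apply: eq_bigr => j _.
by rewrite ifN // neq_ltn ltn_ord.
Qed.

Lemma prefix_span_last xs i : prefix_span xs i.+1 (xs i).
Proof.
exists (fun j => if j == i then 1 else 0).
rewrite big_ord_recr /= eqxx scale1r big1 ?add0r // => j _.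
by rewrite ifN ?scale0r // neq_ltn ltn_ord.
Qed.

Lemma eq_prefix_span xs ys i : (forall j, (j < i)%N -> xs j = ys j) ->
  prefix_span xs i = prefix_span ys i.
Proof.
move=> eq_xy; have eq_sum c : \sum_(j < i) c j *: xs j = \sum_(j < i) c j *: ys j.
  by apply: eq_bigr => j _; rewrite eq_xy.
by apply/seteqP; split=> _ [c ->]; exists c; rewrite eq_sum.
Qed.

(* Unless [M] is finitely generated, spanning one new element at a time
   yields arbitrarily long strict chains of submodules. *)
Lemma finite_length_fg : finite_length M -> exists i xs, forall m, prefix_span xs i m.
Proof.
move=> [n bounded]; apply: contrapT => not_fg.
suff [xs xsP] : exists xs, forall j, (j < n.+1)%N ->
    strict_subset (prefix_span xs j) (prefix_span xs j.+1).
  have := bounded n.+1 (prefix_span xs) (fun i _ => prefix_span_submodule xs i) xsP.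
  by rewrite ltnn.
elim: n.+1 => [|i [xs xsP]]; first by exists (fun _ => 0).
have [m span_m] : exists m, ~ prefix_span xs i m.
  apply: contrapT => all_span; apply: not_fg; exists i, xs => m.
  by apply: contrapT => span_m; apply: all_span; exists m.
pose ys j := if j == i then m else xs j.
have span_ys j : (j <= i)%N -> prefix_span ys j = prefix_span xs j.
  move=> le_ji; apply: eq_prefix_span => k lt_kj.
  by rewrite /ys ifN // ltn_eqF // (leq_trans lt_kj).
exists ys => j; rewrite ltnS leq_eqVlt => /predU1P[->|lt_ji].
  rewrite span_ys //; split; first by rewrite -span_ys //; apply: prefix_spanS.
  by exists m; split=> //; have := prefix_span_last ys i; rewrite /ys eqxx.
by rewrite !span_ys ?(ltnW lt_ji) //; apply: xsP.
Qed.

End FiniteGeneration.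

Lemma QF_fl_images_of_injectives (S : comNzRingType) : QF S -> fl_images_of_injectives S.
Proof.
move=> [_ injS] M flM; have [n [xs spanM]] := finite_length_fg flM.
exists 'rV[S]_n, (comb_lin (n := n) xs); split; first exact: injective_rV.
move=> m; have [c ->] := spanM m; exists (\row_(j < n) c j).
by apply: eq_bigr => j _; rewrite mxE.
Qed.

Section IdealIntervals.
Variable S : comNzRingType.
Implicit Types (I J K L : set S) (a : S).

Definition ideal_sum I J : set S := [set x | exists a b, [/\ I a, J b & x = a + b]].
Definition ideal_adjoin I a : set S := [set x | exists i t, I i /\ x = i + a * t].
Definition ideal_colon I a : set S := [set x | I (a * x)].

Lemma idealN I x : is_ideal I -> I x -> I (- x).
Proof. by case=> _ _ IM Ix; rewrite -mulN1r; apply: IM. Qed.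

Lemma idealB I x y : is_ideal I -> I x -> I y -> I (x - y).
Proof. by move=> idI Ix Iy; case: (idI) => _ ID _; apply: ID; last exact: idealN. Qed.

Lemma setI_ideal I J : is_ideal I -> is_ideal J -> is_ideal (I `&` J).
Proof.
case=> I0 ID IM [J0 JD JM]; split=> //.
- by move=> x y [Ix Jx] [Iy Jy]; split; [apply: ID | apply: JD].
- by move=> a x [Ix Jx]; split; [apply: IM | apply: JM].
Qed.

Lemma ideal_sum_ideal I J : is_ideal I -> is_ideal J -> is_ideal (ideal_sum I J).
Proof.
case=> I0 ID IM [J0 JD JM]; split.
- by exists 0, 0; rewrite addr0.
- move=> _ _ [a [b [Ia Jb ->]]] [c [d [Ic Jd ->]]]; exists (a + c), (b + d).
  by split; [apply: ID | apply: JD | rewrite addrACA].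
- move=> r _ [a [b [Ia Jb ->]]]; exists (r * a), (r * b).
  by split; [apply: IM | apply: JM | rewrite mulrDr].
Qed.

Lemma ideal_sum_subl I J : is_ideal J -> I `<=` ideal_sum I J.
Proof. by case=> J0 _ _ x Ix; exists x, 0; rewrite addr0. Qed.

Lemma ideal_sum_subr I J : is_ideal I -> J `<=` ideal_sum I J.
Proof. by case=> I0 _ _ x Jx; exists 0, x; rewrite add0r. Qed.

Lemma ideal_sum_subS I I' J : I `<=` I' -> ideal_sum I J `<=` ideal_sum I' J.
Proof. by move=> II' _ [a [b [Ia Jb ->]]]; exists a, b; split=> //; apply: II'. Qed.

Lemma ideal_sum_min I J K : is_ideal K -> I `<=` K -> J `<=` K -> ideal_sum I J `<=` K.
Proof. by case=> _ KD _ IK JK _ [a [b [Ia Jb ->]]]; apply: KD; [apply: IK | apply: JK]. Qed.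

Lemma ideal_adjoin_ideal I a : is_ideal I -> is_ideal (ideal_adjoin I a).
Proof.
case=> I0 ID IM; split.
- by exists 0, 0; rewrite mulr0 addr0.
- move=> _ _ [i [t [Ii ->]]] [j [u [Ij ->]]]; exists (i + j), (t + u).
  by split; [apply: ID | rewrite mulrDr addrACA].
- move=> r _ [i [t [Ii ->]]]; exists (r * i), (r * t).
  by split; [apply: IM | rewrite mulrDr mulrCA].
Qed.

Lemma ideal_adjoin_sub I a : is_ideal I -> I `<=` ideal_adjoin I a.
Proof. by move=> _ x Ix; exists x, 0; rewrite mulr0 addr0. Qed.

Lemma ideal_adjoin_mem I a : is_ideal I -> ideal_adjoin I a a.
Proof. by case=> I0 _ _; exists 0, 1; rewrite add0r mulr1. Qed.

Lemma ideal_colon_ideal I a : is_ideal I -> is_ideal (ideal_colon I a).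
Proof.
case=> I0 ID IM; split.
- by rewrite /ideal_colon /= mulr0.
- by move=> x y; rewrite /ideal_colon /= mulrDr; apply: ID.
- by move=> r x; rewrite /ideal_colon /= mulrCA; apply: IM.
Qed.

Lemma ideal_colon_sub I a : is_ideal I -> I `<=` ideal_colon I a.
Proof. by case=> _ _ IM x Ix; apply: IM. Qed.

Definition ideal_between J K N := [/\ is_ideal N, J `<=` N & N `<=` K].

Definition ideal_chain J K k (N : nat -> set S) :=
  (forall i, (i <= k)%N -> ideal_between J K (N i)) /\
  (forall i, (i < k)%N -> strict_subset (N i) (N i.+1)).

Definition ideal_interval_fl J K :=
  exists n, forall k N, ideal_chain J K k N -> (k <= n)%N.

Lemma ideal_chain_extend J K k N X : ideal_chain J K k N ->
  ideal_between J K X -> strict_subset (N k) X ->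
  ideal_chain J K k.+1 (fun i => if (i <= k)%N then N i else X).
Proof.
case=> NJK Nstrict XJK NX; split=> i le_ik; first by case: ifP => // /NJK.
rewrite ltnS in le_ik; rewrite le_ik; case: ifPn => [/Nstrict//|].
by rewrite -ltnNge ltnS => le_ki; have -> : i = k by apply/eqP; rewrite eqn_leq le_ik.
Qed.

Definition strict_steps (C : nat -> set S) k :=
  count (fun i => `[< strict_subset (C i) (C i.+1) >]) (iota 0 k).

Lemma ideal_chain_of_monotone J K k C :
  (forall i, (i <= k)%N -> ideal_between J K (C i)) ->
  (forall i, (i < k)%N -> C i `<=` C i.+1) ->
  exists D, ideal_chain J K (strict_steps C k) D /\ D (strict_steps C k) `<=` C k.
Proof.
elim: k => [|k IH] CJK Cmono.
  by exists (fun=> C 0%N); split=> //; split=> [i _|//]; apply: CJK.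
have [|i lt_ik|D [Dchain DC]] := IH; [by move=> i /leqW/CJK | exact/Cmono/ltnW |].
rewrite /strict_steps -[in iota _ k.+1]addn1 iotaD count_cat /= addn0 -/(strict_steps C k).
case: (asboolP (strict_subset (C k) (C k.+1))) => [[_ [x [Cx notCx]]]|_]; last first.
  by exists D; split; rewrite ?addn0 // => x /DC; apply: Cmono.
have DCk : strict_subset (D (strict_steps C k)) (C k.+1).
  split=> [z /DC|]; first exact: Cmono.
  by exists x; split=> // /DC.
rewrite addn1; eexists; split; first exact: ideal_chain_extend Dchain (CJK _ _) DCk.
by rewrite /= ltnn.
Qed.

Lemma strict_steps_bounded J K n k C :
  (forall k N, ideal_chain J K k N -> (k <= n)%N) ->
  (forall i, (i <= k)%N -> ideal_between J K (C i)) ->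
  (forall i, (i < k)%N -> C i `<=` C i.+1) -> (strict_steps C k <= n)%N.
Proof.
by move=> bounded CJK Cmono; have [D [/bounded]] := ideal_chain_of_monotone CJK Cmono.
Qed.

(* The modular law: [N = N'] as soon as [N `<=` N'] and both their meets and
   their sums with [K] agree. *)
Lemma strict_subset_setI_or_sum (N N' : set S) K :
  is_ideal N -> is_ideal N' -> is_ideal K -> strict_subset N N' ->
  strict_subset (N `&` K) (N' `&` K) \/ strict_subset (ideal_sum N K) (ideal_sum N' K).
Proof.
move=> idN idN' idK [NN' [y [N'y notNy]]].
have [[x [[N'x Kx] notNx]] | meet_eq] := pselect (exists x, (N' `&` K) x /\ ~ N x).
  by left; split=> [z [/NN' ? ?] // | ]; exists x; split=> // [[]].
right; split; first exact: ideal_sum_subS.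
exists y; split; first exact: (ideal_sum_subl idK N'y).
case=> a [b [Na Kb y_ab]]; apply: notNy; rewrite y_ab; case: (idN) => _ ND _; apply: ND => //.
apply: contrapT => notNb; apply: meet_eq; exists b; split=> //; split=> //.
have -> : b = y - a by rewrite y_ab addrC addKr.
exact: idealB idN' N'y (NN' _ Na).
Qed.

(* Every step of a chain in [[J, L]] is strict after meeting with [K] or after
   adding [K], and each of these two sequences lies in [[J, K]] or [[K, L]]. *)
Lemma ideal_interval_fl_trans J K L : is_ideal J -> is_ideal K -> is_ideal L ->
  J `<=` K -> K `<=` L -> ideal_interval_fl J K -> ideal_interval_fl K L ->
  ideal_interval_fl J L.
Proof.
move=> idJ idK idL JK KL [n1 bounded1] [n2 bounded2]; exists (n1 + n2)%N.
move=> k N [NJL Nstrict].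
pose C1 i := N i `&` K; pose C2 i := ideal_sum (N i) K.
have NS i : (i < k)%N -> N i `<=` N i.+1 by move=> /Nstrict[].
have le1 : (strict_steps C1 k <= n1)%N.
  apply: strict_steps_bounded bounded1 _ _ => [i /NJL[idN JN _]|i /NS NN'].
    by split; [exact: setI_ideal | move=> x Jx; split; [exact: JN | exact: JK] | move=> x []].
  by move=> x [/NN' ? ?].
have le2 : (strict_steps C2 k <= n2)%N.
  apply: strict_steps_bounded bounded2 _ _ => [i /NJL[idN _ NL]|i /NS NN'].
    split; [exact: ideal_sum_ideal | exact: ideal_sum_subr | exact: ideal_sum_min].
  exact: ideal_sum_subS.
apply: leq_trans (leq_add le1 le2); rewrite /strict_steps -count_predUI.
apply: leq_trans (leq_addr _ _).
rewrite -[X in (X <= _)%N](size_iota 0 k) -count_predT; apply/eq_leq/eq_in_count.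
move=> i; rewrite mem_iota add0n => lt_ik; apply/esym/orP.
have [[idN _ _] [idN' _ _]] := (NJL i (ltnW lt_ik), NJL i.+1 lt_ik).
have si := Nstrict i lt_ik.
by case: (strict_subset_setI_or_sum idN idN' idK si) => ?; [left | right]; apply/asboolP.
Qed.

Lemma ideal_interval_fl_colon I a : is_ideal I ->
  ideal_interval_fl (ideal_colon I a) setT -> ideal_interval_fl I (ideal_adjoin I a).
Proof.
move=> idI [n bounded]; exists n => k N [NIa Nstrict].
apply: (bounded k (fun i => ideal_colon (N i) a)); split=> i lt_ik.
  have [idN IN _] := NIa i lt_ik.
  by split=> //; [exact: ideal_colon_ideal | move=> x /IN].
have [[idN IN _] [idN' IN' N'Ia]] := (NIa i (ltnW lt_ik), NIa i.+1 lt_ik).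
have [NN' [y [N'y notNy]]] := Nstrict i lt_ik.
split=> [x /NN' //|]; have [j [t [Ij y_jat]]] := N'Ia y N'y.
exists t; split.
  rewrite /ideal_colon /=; have -> : a * t = y - j by rewrite y_jat addrC addKr.
  exact: idealB idN' N'y (IN' _ Ij).
by move=> Nat; apply: notNy; rewrite y_jat; case: (idN) => _ ND _; apply: ND => //; apply: IN.
Qed.

Lemma ideal_interval_fl_degenerate J K : K `<=` J -> ideal_interval_fl J K.
Proof.
move=> KJ; exists 0%N => -[//|k] N [NJK Nstrict].
have [_ [y [N1y notN0y]]] := Nstrict 0%N (ltn0Sn _).
have [_ JN0 _] := NJK 0%N (leq0n _); have [_ _ N1K] := NJK 1%N (ltn0Sn _).
by case: notN0y; apply/JN0/KJ/N1K.
Qed.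

Lemma ideal_interval_fl_maximal I : is_ideal I ->
  (forall a, ~ I a -> ideal_adjoin I a = setT) -> ideal_interval_fl I setT.
Proof.
move=> idI Imax; exists 1%N => -[//|[//|k]] N [NIS Nstrict].
have [N0N1 [y [N1y notN0y]]] := Nstrict 0%N (ltn0Sn _).
have [_ [z [N2z notN1z]]] := Nstrict 1%N isT.
have [[_ IN0 _] [[_ ND NM] _ _]] := (NIS 0%N (leq0n _), NIS 1%N (ltn0Sn _)).
exfalso; apply: notN1z; have [i [t [Ii ->]]] : ideal_adjoin I y z by rewrite Imax // => /IN0.
apply: ND; first exact/N0N1/IN0.
by rewrite mulrC; apply: NM.
Qed.

End IdealIntervals.

Lemma noetherian_maximal (S : comNzRingType) (P : set S -> Prop) : noetherian S ->
  (exists I, is_ideal I /\ P I) ->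
  exists I, [/\ is_ideal I, P I & forall J, is_ideal J -> I `<=` J -> P J -> J `<=` I].
Proof.
move=> noethS [I0 PI0]; apply: contrapT => no_max.
pose idealP := {I : set S | is_ideal I /\ P I}.
have next_ex (I : idealP) : exists J : idealP, strict_subset (sval I) (sval J).
  case: I => I [idI PI]; apply: contrapT => no_next; apply: no_max.
  exists I; split=> // J idJ IJ PJ x Jx; apply: contrapT => notIx; apply: no_next.
  by exists (exist _ J (conj idJ PJ)); split=> //; exists x.
pose next I := sval (cid (next_ex I)).
have nextP I : strict_subset (sval I) (sval (next I)) by rewrite /next; case: cid.
pose chain n := iter n next (exist _ I0 PI0).
have [N stable] := noethS (fun n => sval (chain n)) (fun n => proj1 (svalP (chain n)))
  (fun n => proj1 (nextP (chain n))).
have [_ [x [Nx notNx]]] := nextP (chain N).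
by apply/notNx/(stable N.+1 (leqnSn _)).
Qed.

Lemma noetherian_image (R S : comNzRingType) (phi : {rmorphism R -> S}) :
  (forall s, exists r, phi r = s) -> noetherian R -> noetherian S.
Proof.
move=> phi_surj noethR I idI incrI.
have idIphi n : is_ideal (phi @^-1` I n).
  have [I0 ID IM] := idI n; split.
  - by rewrite /preimage /= rmorph0.
  - by move=> x y; rewrite /preimage /= rmorphD; apply: ID.
  - by move=> a x; rewrite /preimage /= rmorphM; apply: IM.
have [N stable] := noethR _ idIphi (fun n x => incrI n (phi x)).
by exists N => n le_Nn s; have [r <-] := phi_surj s; apply: stable.
Qed.

Lemma finite_length_quot (S U : comNzRingType) (pi : {rmorphism S -> U}) (J : set S) :
  (forall u, exists s, pi s = u) -> (forall x, J x -> pi x = 0) ->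
  ideal_interval_fl J setT -> finite_length U^o.
Proof.
move=> pi_surj kerJ [n bounded]; exists n => k N Nsub Nstrict.
apply: (bounded k (fun i => pi @^-1` N i)); split=> i lt_ik.
  have [N0 ND NZ] := Nsub i lt_ik; split=> //; last by move=> x /kerJ; rewrite /preimage /= => ->.
  split; rewrite /preimage /=.
  - by rewrite rmorph0.
  - by move=> x y; rewrite rmorphD; apply: ND.
  - by move=> a x; rewrite rmorphM; apply: NZ.
have [NN' [u [N'u notNu]]] := Nstrict i lt_ik; have [s s_u] := pi_surj u.
by split=> [x /NN' //|]; exists s; rewrite /preimage /= s_u.
Qed.

Lemma finite_length_restrict_scalars (T U : comNzRingType) (g : {rmorphism T -> U}) :
  (forall u, exists t, g t = u) -> finite_length U^o -> finite_length (restrict_scalars g).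
Proof.
move=> g_surj [n bounded]; exists n => k N Nsub Nstrict; apply: (bounded k N) => // i lt_ik.
have [N0 ND NZ] := Nsub i lt_ik; split=> // u m; have [t <-] := g_surj u; exact: NZ.
Qed.

(* An injective module is divisible by the regular element [x], while the
   nonzero module [U] is killed by it. *)
Lemma not_fl_images_of_injectives (T U : comNzRingType) (g : {rmorphism T -> U}) (x : T) :
  (forall u, exists t, g t = u) -> finite_length U^o -> GRing.lreg x -> g x = 0 ->
  ~ fl_images_of_injectives T.
Proof.
move=> g_surj flU regx gx0 images.
have [E [p [injE p_surj]]] := images _ (finite_length_restrict_scalars g_surj flU).
have [m] := image_divisible injE p_surj regx (1 : restrict_scalars g).
by rewrite restrict_scalarsZ gx0 mul0r => /eqP; rewrite oner_eq0.
Qed.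

Section MaximalInfiniteLength.
Variables (S : comNzRingType) (I : set S).
Hypotheses (idealI : is_ideal I) (not_flI : ~ ideal_interval_fl I setT).
Hypothesis fl_above : forall J, is_ideal J -> strict_subset I J -> ideal_interval_fl J setT.

Lemma ideal_proper_of_not_fl : ~ I 1.
Proof.
move=> I1; apply/not_flI/ideal_interval_fl_degenerate => x _.
by rewrite -(mulr1 x); case: idealI => _ _; apply.
Qed.

(* If [x y] lies in [I] but neither factor does, then [I : x] and [I + x S] both
   strictly contain [I], and [(I + x S) / I] is isomorphic to [S / (I : x)]. *)
Lemma ideal_prime_of_not_fl x y : I (x * y) -> I x \/ I y.
Proof.
move=> Ixy; apply: contrapT => /not_orP[notIx notIy]; apply: not_flI.
have Ix_above : strict_subset I (ideal_adjoin I x).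
  by split; [exact: ideal_adjoin_sub | exists x; split=> //; exact: ideal_adjoin_mem].
have colon_above : strict_subset I (ideal_colon I x).
  by split; [exact: ideal_colon_sub | exists y].
apply: ideal_interval_fl_trans (ideal_adjoin_sub _ idealI) _ _ _ => //.
- exact: ideal_adjoin_ideal.
- exact: ideal_interval_fl_colon (fl_above (ideal_colon_ideal _ idealI) colon_above).
- exact: fl_above (ideal_adjoin_ideal _ idealI) Ix_above.
Qed.

Lemma ideal_maximal_of_not_fl :
  fl_images_of_injectives (quot idealI ideal_proper_of_not_fl) ->
  forall a, ~ I a -> ideal_adjoin I a = setT.
Proof.
move=> images a notIa; apply: contrapT => Ia_proper.
have idJ := ideal_adjoin_ideal a idealI.
have properJ : ~ ideal_adjoin I a 1.
  move=> J1; apply/Ia_proper/seteqP; split=> // s _.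
  by rewrite -(mulr1 s); case: idJ => _ _; apply.
have IJ := ideal_adjoin_sub a idealI.
have kerI x : I x -> quot_pi idJ properJ x = 0 by move=> /IJ /quot_pi_eq0.
pose g : {rmorphism _ -> _} := @quot_lift _ _ idealI ideal_proper_of_not_fl _ _ kerI.
have gE s : g (quot_pi _ _ s) = quot_pi idJ properJ s by exact: quot_liftE.
apply: (not_fl_images_of_injectives (g := g) (x := quot_pi _ _ a)) images.
- by move=> u; exists (quot_pi _ _ (repr u)); rewrite gE quot_piK.
- apply: (finite_length_quot (pi := quot_pi idJ properJ) (J := ideal_adjoin I a)).
  + by move=> u; exists (repr u); apply: quot_piK.
  + by move=> x Jx; apply/quot_pi_eq0.
  + by apply: (fl_above idJ); split=> //; exists a; split=> //; exact: ideal_adjoin_mem.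
- apply: mulrI0_lreg => t; rewrite -(quot_piK t) -rmorphM => /quot_pi_eq0.
  by case/ideal_prime_of_not_fl => [/notIa [] | Ir]; apply/quot_pi_eq0.
- by rewrite gE; apply/quot_pi_eq0/ideal_adjoin_mem.
Qed.

End MaximalInfiniteLength.

(* An ideal [I] maximal among those with [S / I] of infinite length is prime,
   hence maximal since [S / I] is among the factor rings; so [S / I] is a field. *)
Lemma finite_length_of_factor_images (S : comNzRingType) : noetherian S ->
  (forall (T : comNzRingType) (psi : {rmorphism S -> T}),
     (forall t, exists s, psi s = t) -> fl_images_of_injectives T) ->
  finite_length S^o.
Proof.
move=> noethS images.
have ideal0 : is_ideal [set 0 : S].
  by split=> // [x y -> ->|a x ->]; rewrite ?addr0 ?mulr0.
apply: (finite_length_quot (pi := idfun) (J := [set 0])) => [s | x -> // |].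
  by exists s.
apply: contrapT => not_fl0.
have [I [idealI not_flI Imax]] :=
  noetherian_maximal (P := fun I => ~ ideal_interval_fl I setT) noethS
    (ex_intro _ _ (conj ideal0 not_fl0)).
have fl_above J : is_ideal J -> strict_subset I J -> ideal_interval_fl J setT.
  move=> idJ [IJ [x [Jx notIx]]]; apply: contrapT => not_flJ.
  exact/notIx/(Imax J idJ IJ not_flJ).
apply/not_flI/ideal_interval_fl_maximal => //.
apply: (ideal_maximal_of_not_fl fl_above).
apply: (images _ (quot_pi idealI (ideal_proper_of_not_fl idealI not_flI))).
by move=> t; exists (repr t); apply: quot_piK.
Qed.

Unset Implicit Arguments.

(* Factor rings of R are represented as rings S with a surjective ring
   morphism R -> S (S is then isomorphic to R / ker). *)
Theorem mainTheorem14 (R : comNzRingType) :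
  noetherian R ->
  ((forall (S : comNzRingType) (phi : {rmorphism R -> S}),
       (forall s : S, exists r : R, phi r = s) -> fl_images_of_injectives S)
   <->
   (forall (S : comNzRingType) (phi : {rmorphism R -> S}),
       (forall s : S, exists r : R, phi r = s) -> QF S)).
Proof.
move=> noethR; split=> [images S phi phi_surj | QF_factors S phi phi_surj]; last first.
  exact/QF_fl_images_of_injectives/(QF_factors S phi).
have noethS := noetherian_image phi_surj noethR.
have factor_images (T : comNzRingType) (psi : {rmorphism S -> T}) :
    (forall t, exists s, psi s = t) -> fl_images_of_injectives T.
  move=> psi_surj; apply: (images T (psi \o phi)) => t.
  by have [s <-] := psi_surj t; have [r <-] := phi_surj s; exists r.
have flS := finite_length_of_factor_images noethS factor_images.
have [E [p [injE p_surj]]] := images S phi phi_surj _ flS.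
by split; last exact: self_injective_of_image injE p_surj.
Qed.
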